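(* Suppose that each of $k_0$ non-defective items and $k_1$ defective items is individually tested $\tilde t$ times (i.e., $\tilde t(k_0+k_1)$ tests in total), where each individual test of an item returns its defectivity status (1 if defective, 0 if not) flipped independently with probability $\rho \in (0,\frac12)$. For any fixed constant $\zeta \in (\rho,1-\rho)$ and any $\delta_0, \delta_1, \epsilon_1 \in (0,1)$, suppose that \[ \tilde t \ge \max\bigg\{ \frac{\log \frac{k_0}{\delta_0}}{ D_2(\zeta \| \rho) }, \frac{\log \frac{1}{\epsilon_1 \delta_1}}{ D_2(\zeta \| 1 - \rho) } \bigg\}. \] Then, if $k_0 = o(k_1)$, for sufficiently large $n$ it holds with probability at least $1-\delta_0-\delta_1$ that the $(1-\epsilon_1)k_1$ items that returned a positive outcome the highest number of times are all defective.
   Context: Logarithms are natural. $D_2(a\|b) = a\log\frac ab + (1-a)\log\frac{1-a}{1-b}$ is the binary relative entropy. The quantities $k_0, k_1$ (and possibly $\delta_0,\delta_1$) may depend on an underlying size parameter $n$, with asymptotics as $n\to\infty$. *)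

From HB Require Import structures.
From mathcomp Require Import all_boot all_order all_algebra.
From mathcomp Require Import all_classical all_reals all_analysis.
Set Implicit Arguments. Unset Strict Implicit. Unset Printing Implicit Defensive.
Import Order.TTheory GRing.Theory Num.Theory.
Local Open Scope ring_scope.

Definition D2 {R : realType} (a b : R) : R :=
  a * ln (a / b) + (1 - a) * ln ((1 - a) / (1 - b)).

(* Items are 'I_(k0 + k1); the first k0 are non-defective, the last k1 defective. *)
Definition defective (k0 k1 : nat) (i : 'I_(k0 + k1)) : bool := (k0 <= i)%N.

Definition outcome (k0 k1 t : nat) := {ffun 'I_(k0 + k1) * 'I_t -> bool}.

Definition outcome_prob {R : realType} (rho : R) (k0 k1 t : nat)
    (w : outcome k0 k1 t) : R :=
  \prod_(p : 'I_(k0 + k1) * 'I_t)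
     (if w p == defective p.1 then 1 - rho else rho).

Definition pos_count (k0 k1 t : nat) (w : outcome k0 k1 t) (i : 'I_(k0 + k1)) : nat :=
  (\sum_(j < t) (w (i, j) : nat))%N.

(* The success event: every set S of ceil((1 - eps1) k1) items that returned a
   positive outcome the highest number of times (i.e. every item of S has at
   least as many positives as every item outside S; any tie-breaking) consists
   of defective items only. *)
Definition top_all_defective {R : realType} (eps1 : R) (k0 k1 t : nat)
    (w : outcome k0 k1 t) : Prop :=
  forall S : {set 'I_(k0 + k1)},
    (#|S|%:R - 1 < (1 - eps1) * k1%:R) -> ((1 - eps1) * k1%:R <= #|S|%:R) ->
    (forall i j, i \in S -> j \notin S -> (pos_count w j <= pos_count w i)%N) ->
    forall i, i \in S -> defective i.

Definition success_prob {R : realType} (rho eps1 : R) (k0 k1 t : nat) : R :=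
  \sum_(w : outcome k0 k1 t | `[< top_all_defective eps1 w >]) outcome_prob rho w.

(* The number of flipped tests of an item is Binomial(t, rho), and the Chernoff
   bound with the optimal exponential tilt gives P(flips >= a t) <= exp(-t D2(a||rho)).
   Hence a non-defective item reaches zeta t positive outcomes with probability at
   most delta0 / k0, and a defective item stays at or below zeta t with probability
   at most eps1 delta1 (using D2(1 - zeta||rho) = D2(zeta||1 - rho)).  If no
   non-defective item reaches zeta t and at most eps1 k1 defective items stay at or
   below it, then every top set S is defective: a non-defective member of S would
   force all the remaining (1 - eps1) k1 defective items into S as well, making S
   too large.  Markov's inequality for the number of non-defective offenders plus
   the number of defective offenders divided by eps1 k1 bounds the failure
   probability by delta0 + delta1. *)

From HB Require Import structures.
From mathcomp Require Import all_boot all_order all_algebra.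
From mathcomp Require Import all_classical all_reals all_analysis.
From mathcomp Require Import ring lra.
Import Order.TTheory GRing.Theory Num.Theory.
Local Open Scope classical_set_scope.
Local Open Scope ring_scope.
Set Implicit Arguments. Unset Strict Implicit. Unset Printing Implicit Defensive.

Section RelativeEntropy.
Variable R : realType.
Implicit Types a b : R.

Lemma ln_lt_subr1 (y : R) : 0 < y -> y != 1 -> ln y < y - 1.
Proof.
move=> y0 y1; have ln_neq0 : ln y != 0 by rewrite ln_eq0.
by have := expR_gt1Dx ln_neq0; rewrite lnK //; lra.
Qed.

Lemma D2_gt0 a b : 0 < a < 1 -> 0 < b < 1 -> a != b -> 0 < D2 a b.
Proof.
move=> /andP[a0 a1] /andP[b0 b1] ab.
have lnV_div x y : 0 < x -> 0 < y -> ln (x / y) = - ln (y / x).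
  by move=> x0 y0; rewrite -lnV ?invf_div // posrE divr_gt0.
have ba : b / a != 1.
  by apply: contra ab => /eqP ba1; rewrite -[b](divfK (lt0r_neq0 a0)) ba1 mul1r.
have ln_ratio_lt : a * ln (b / a) < a * (b / a - 1).
  by rewrite ltr_pM2l // ln_lt_subr1 ?divr_gt0.
have ln_coratio_le : (1 - a) * ln ((1 - b) / (1 - a)) <= (1 - a) * ((1 - b) / (1 - a) - 1).
  rewrite ler_pM2l ?subr_gt0 //; have := expR_ge1Dx (ln ((1 - b) / (1 - a))).
  rewrite lnK ?posrE ?divr_gt0 ?subr_gt0 //; lra.
have ratio_sub1 : a * (b / a - 1) = b - a by field; lra.
have coratio_sub1 : (1 - a) * ((1 - b) / (1 - a) - 1) = a - b by field; lra.
rewrite /D2 lnV_div // [ln ((1 - a) / _)]lnV_div ?subr_gt0 //; lra.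
Qed.

Lemma D2_complement a b : D2 a (1 - b) = D2 (1 - a) b.
Proof.
have opp_sub x : 1 - (1 - x) = x :> R by rewrite opprB addrC subrK.
by rewrite /D2 !opp_sub addrC.
Qed.

(* [s] is the Chernoff-optimal tilt: it makes the tilted Bernoulli(rho) have mean [a]. *)
Lemma bernoulli_tilted_mgf (rho a : R) : 0 < rho -> rho < a < 1 ->
  let s := ln (a / rho) - ln ((1 - a) / (1 - rho)) in
  0 <= s /\ rho * expR (s * (1 - a)) + (1 - rho) * expR (- (s * a)) = expR (- D2 a rho).
Proof.
move=> rho0 /andP[ra a1] s.
have ratio_gt0 : 0 < a / rho by apply: divr_gt0; lra.
have coratio_gt0 : 0 < (1 - a) / (1 - rho) by apply: divr_gt0; lra.
split.
  rewrite subr_ge0 (@le_trans _ _ 0) ?ln_le0 ?ln_ge0 //.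
    by rewrite ler_pdivrMr; lra.
  by rewrite ler_pdivlMr; lra.
have es : expR s = (a / rho) / ((1 - a) / (1 - rho)) by rewrite expRD expRN !lnK.
have -> : s * (1 - a) = s + - (s * a) by ring.
have -> : - D2 a rho = - (s * a) + - ln ((1 - a) / (1 - rho)) by rewrite /D2 /s; ring.
rewrite [expR (s + _)]expRD es [RHS]expRD [expR (- ln _)]expRN lnK //.
field; lra.
Qed.

Lemma expRN_pow_le_inv (D y : R) (t : nat) :
  0 < D -> 0 < y -> ln y / D <= t%:R -> expR (- D) ^+ t <= y^-1.
Proof.
move=> D0 y0; rewrite ler_pdivrMr // => t_ge.
by rewrite -expRM_natl -(lnK y0) -expRN ler_expR; lra.
Qed.

End RelativeEntropy.

Lemma prod_row (R : comNzRingType) (I J : finType) (H : I * J -> R) (i : I) :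
  (forall p, p.1 != i -> H p = 1) -> \prod_p H p = \prod_j H (i, j).
Proof.
move=> H_off_row.
transitivity (\prod_(p : I * J) H (p.1, p.2)); first by apply: eq_bigr => -[].
rewrite -(pair_bigA _ (fun a b => H (a, b))) (bigD1 i) //=.
rewrite [X in _ * X]big1 ?mulr1 // => a a_neq_i.
by apply: big1 => j _; apply: H_off_row.
Qed.

Lemma le_indicator_expR (R : realType) (s x : R) : 0 <= s -> (0 <= x)%R%:R <= expR (s * x).
Proof.
move=> s0; case: (boolP (0 <= x)) => x0; last exact/ltW/expR_gt0.
by rewrite -expR0 ler_expR mulr_ge0.
Qed.

Lemma defective_lshift k0 k1 (i : 'I_k0) : defective (lshift k1 i) = false.
Proof. by rewrite /defective /= leqNgt ltn_ord. Qed.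

Lemma defective_rshift k0 k1 (i : 'I_k1) : defective (rshift k0 i).
Proof. by rewrite /defective /= leq_addr. Qed.

Section IndividualTesting.
Variables (R : realType) (rho : R) (k0 k1 t : nat).
Local Notation outcome := (outcome k0 k1 t).
Local Notation test := ('I_(k0 + k1) * 'I_t)%type.

Definition expectation (X : outcome -> R) : R := \sum_w outcome_prob rho w * X w.

Lemma expectation_prod_flips (G : test -> bool -> R) :
  expectation (fun w => \prod_p G p (w p != defective p.1)) =
  \prod_p (rho * G p true + (1 - rho) * G p false).
Proof.
transitivity (\prod_p \sum_(b : bool)
    (if b == defective p.1 then 1 - rho else rho) * G p (b != defective p.1)).
  by rewrite bigA_distr_bigA; apply: eq_bigr => w _; rewrite -big_split.
by apply: eq_bigr => p _; rewrite big_bool; case: defective => //=; rewrite addrC.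
Qed.

Lemma expectation1 : expectation (fun=> 1) = 1.
Proof.
transitivity (expectation (fun w => \prod_p (fun _ _ => 1) p (w p != defective p.1))).
  by apply: eq_bigr => w _; rewrite big1.
by rewrite (expectation_prod_flips (fun _ _ => 1)) big1 // => p _; rewrite !mulr1 subrKC.
Qed.

Lemma expectationZ (c : R) (X : outcome -> R) :
  expectation (fun w => c * X w) = c * expectation X.
Proof. by rewrite /expectation mulr_sumr; apply: eq_bigr => w _; rewrite mulrCA. Qed.

Lemma expectationD (X Y : outcome -> R) :
  expectation (fun w => X w + Y w) = expectation X + expectation Y.
Proof. by rewrite /expectation -big_split; apply: eq_bigr => w _; rewrite mulrDr. Qed.

Lemma expectation_sum (I : Type) (r : seq I) (P : pred I) (X : I -> outcome -> R) :
  expectation (fun w => \sum_(i <- r | P i) X i w) = \sum_(i <- r | P i) expectation (X i).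
Proof. by rewrite /expectation exchange_big; apply: eq_bigr => w _; rewrite mulr_sumr. Qed.

Hypothesis rho01 : 0 <= rho <= 1.

Lemma outcome_prob_ge0 (w : outcome) : 0 <= outcome_prob rho w.
Proof. by case/andP: rho01 => ? ?; apply: prodr_ge0 => p _; case: ifP => _; lra. Qed.

Lemma ler_expectation (X Y : outcome -> R) :
  (forall w, X w <= Y w) -> expectation X <= expectation Y.
Proof. by move=> XY; apply: ler_sum => w _; rewrite ler_wpM2l ?outcome_prob_ge0. Qed.

Definition flip_count (w : outcome) (i : 'I_(k0 + k1)) : nat :=
  \sum_(j < t) (w (i, j) != defective i).

Lemma chernoff_flip_count (a : R) (i : 'I_(k0 + k1)) : 0 < rho -> rho < a < 1 ->
  expectation (fun w => (a * t%:R <= (flip_count w i)%:R)%R%:R) <= expR (- D2 a rho) ^+ t.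
Proof.
move=> rho0 /(bernoulli_tilted_mgf rho0) [].
set s := _ - _ => s0 mgf.
pose G (p : test) (b : bool) := if p.1 == i then expR (s * (b%:R - a)) else 1.
have G_row (w : outcome) : \prod_p G p (w p != defective p.1) =
               expR (s * ((flip_count w i)%:R - a * t%:R)).
  rewrite (@prod_row _ _ _ _ i) => [|p /negbTE off_row]; last by rewrite /G off_row.
  rewrite /G /= eqxx -expR_sum -mulr_sumr sumrB sumr_const card_ord mulr_natr.
  by rewrite /flip_count natr_sum.
apply: (@le_trans _ _ (expectation (fun w => \prod_p G p (w p != defective p.1)))).
  apply: ler_expectation => w; rewrite G_row.
  by have := le_indicator_expR ((flip_count w i)%:R - a * t%:R) s0; rewrite subr_ge0.
rewrite expectation_prod_flips (@prod_row _ _ _ _ i) => [|p /negbTE off_row]; last first.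
  by rewrite /G off_row !mulr1 subrKC.
rewrite (eq_bigr (fun=> expR (- D2 a rho))) ?prodr_const ?card_ord // => j _.
by rewrite /G /= eqxx mulr1n mulr0n sub0r mulrN.
Qed.

Lemma pos_count_nondefective w i : ~~ defective i -> pos_count w i = flip_count w i.
Proof. by move=> /negbTE di; apply: eq_bigr => j _; rewrite di; case: (w (i, j)). Qed.

Lemma pos_count_defective w i : defective i -> (pos_count w i + flip_count w i)%N = t.
Proof.
move=> di; rewrite /pos_count /flip_count di -big_split /=.
by rewrite (eq_bigr (fun=> 1%N)) ?sum1_card ?card_ord // => j _; case: (w (i, j)).
Qed.

Lemma nondefective_tail (zeta : R) (i : 'I_k0) : 0 < rho -> rho < zeta < 1 ->
  expectation (fun w => (zeta * t%:R <= (pos_count w (lshift k1 i))%:R)%R%:R)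
    <= expR (- D2 zeta rho) ^+ t.
Proof.
move=> rho0 rz; rewrite /expectation.
under eq_bigr do rewrite pos_count_nondefective ?defective_lshift //.
exact: chernoff_flip_count.
Qed.

Lemma defective_tail (zeta : R) (i : 'I_k1) : 0 < rho -> 0 < zeta < 1 - rho ->
  expectation (fun w => ((pos_count w (rshift k0 i))%:R <= zeta * t%:R)%R%:R)
    <= expR (- D2 zeta (1 - rho)) ^+ t.
Proof.
move=> rho0 /andP[z0 z1]; rewrite D2_complement /expectation.
under eq_bigr => w _.
  have /(congr1 (GRing.natmul (1 : R))) := pos_count_defective w (defective_rshift k0 i).
  rewrite natrD => count_sum.
  have -> : ((pos_count w (rshift k0 i))%:R <= zeta * t%:R) =
            ((1 - zeta) * t%:R <= (flip_count w (rshift k0 i))%:R).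
    by apply/idP/idP; lra.
  over.
by apply: chernoff_flip_count => //; lra.
Qed.

Lemma top_all_defective_of_separated (eps1 z : R) (w : outcome) :
  (forall i : 'I_k0, (pos_count w (lshift k1 i))%:R < z) ->
  #|[set i : 'I_k1 | (pos_count w (rshift k0 i))%:R <= z]%SET|%:R <= eps1 * k1%:R ->
  top_all_defective eps1 w.
Proof.
move=> low few S S_lt S_ge top j jS.
case: (split_ordP j) => [j0 ej|j1 ->]; last exact: defective_rshift.
exfalso; set Bad := [set _ | _]%SET in few.
have GoodS : j |: (@rshift k0 k1 @: (~: Bad)) \subset S.
  apply/fintype.subsetP => x; rewrite !inE => /orP[/eqP -> //|/imsetP[i]].
  rewrite !inE -ltNge => zi ->; apply: contraT => iS.
  by have := top _ _ jS iS; rewrite -(ler_nat R) ej; have := low j0; lra.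
have j_notin : j \notin @rshift k0 k1 @: (~: Bad).
  apply/imsetP => -[i _ /(congr1 (@defective k0 k1))].
  by rewrite ej defective_lshift defective_rshift.
have := subset_leq_card GoodS.
rewrite cardsU1 j_notin card_imset; last exact: rshift_inj.
have := cardsC Bad; rewrite card_ord => /(congr1 (GRing.natmul (1 : R))).
by rewrite -!(ler_nat R) !natrD mulr1n; lra.
Qed.

Definition failure_weight (eps1 z : R) (w : outcome) : R :=
  \sum_(i < k0) (z <= (pos_count w (lshift k1 i))%:R)%R%:R +
  (eps1 * k1%:R)^-1 * \sum_(i < k1) ((pos_count w (rshift k0 i))%:R <= z)%R%:R.

Lemma failure_weight_ge0 (eps1 z : R) (w : outcome) :
  0 <= eps1 -> 0 <= failure_weight eps1 z w.
Proof. by move=> eps0; rewrite addr_ge0 ?mulr_ge0 ?invr_ge0 ?mulr_ge0 ?sumr_ge0. Qed.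

Lemma top_all_defective_of_failure_weight (eps1 z : R) (w : outcome) :
  0 < eps1 -> failure_weight eps1 z w < 1 -> top_all_defective eps1 w.
Proof.
rewrite /failure_weight => eps0.
set F0 := \sum_(i < k0) _; set N := \sum_(i < k1) _ => lt1.
have F0_ge0 : 0 <= F0 by rewrite sumr_ge0.
have N_term_ge0 : 0 <= (eps1 * k1%:R)^-1 * N.
  by rewrite mulr_ge0 ?sumr_ge0 // invr_ge0 mulr_ge0 // ltW.
have cardBad : #|[set i : 'I_k1 | (pos_count w (rshift k0 i))%:R <= z]%SET|%:R = N.
  rewrite -sum1_card natr_sum big_mkcond /=; apply: eq_bigr => i _.
  by rewrite inE; case: ifP.
apply: (top_all_defective_of_separated (z := z)).
  move=> i; rewrite ltNge; apply/negP => zi.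
  have : 1 <= F0 by rewrite /F0 (bigD1 i) //= zi lerDl sumr_ge0.
  lra.
rewrite cardBad; have [k1_0|k1_gt0] := posnP k1.
  rewrite /N big1 => [|i _]; first by rewrite mulr_ge0 // ltW.
  by have := ltn_ord i; rewrite {2}k1_0.
have k1eps : 0 < eps1 * k1%:R by rewrite mulr_gt0 ?ltr0n.
have : (eps1 * k1%:R)^-1 * N < 1 by lra.
by rewrite mulrC ltr_pdivrMr // mul1r => /ltW.
Qed.

Lemma success_prob_ge_markov (eps1 : R) (X : outcome -> R) :
  (forall w, 0 <= X w) -> (forall w, X w < 1 -> top_all_defective eps1 w) ->
  1 - expectation X <= success_prob rho eps1 k0 k1 t.
Proof.
move=> X0 Xtop; rewrite -expectation1 /expectation /success_prob.
set P := fun w : outcome => `[< top_all_defective eps1 w >].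
rewrite [X in X - _](bigID P) [X in _ - X](bigID P) /=.
under [X in X + _ - _]eq_bigr do rewrite mulr1.
have : 0 <= \sum_(w | P w) outcome_prob rho w * X w.
  by apply: sumr_ge0 => w _; rewrite mulr_ge0 ?outcome_prob_ge0.
suff : \sum_(w | ~~ P w) outcome_prob rho w * 1 <= \sum_(w | ~~ P w) outcome_prob rho w * X w.
  by lra.
apply: ler_sum => w /asboolPn ntop; rewrite ler_wpM2l ?outcome_prob_ge0 //.
by rewrite leNgt; apply: contra_notN ntop => /Xtop.
Qed.

Lemma expectation_nondefective_failures_le (zeta d0 : R) :
  0 < rho -> rho < zeta < 1 -> 0 < d0 ->
  ln (k0%:R / d0) / D2 zeta rho <= t%:R ->
  expectation (fun w => \sum_(i < k0) (zeta * t%:R <= (pos_count w (lshift k1 i))%:R)%R%:R)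
    <= d0.
Proof.
move=> rho0 rz d0_gt0 t_ge; rewrite expectation_sum.
apply: le_trans (ler_sum _ (fun i _ => nondefective_tail i rho0 rz)) _.
rewrite sumr_const card_ord -[expR _ ^+ t *+ _]mulr_natl.
have [->|k0_gt0] := posnP k0; first by rewrite mul0r ltW.
have D_gt0 : 0 < D2 zeta rho.
  case/andP: rz => rz z1.
  by apply: D2_gt0; rewrite ?(gt_eqF rz) //; apply/andP; split; lra.
have y_gt0 : 0 < k0%:R / d0 by rewrite divr_gt0 ?ltr0n.
have := expRN_pow_le_inv D_gt0 y_gt0 t_ge.
rewrite invf_div => tail_le.
by rewrite (le_trans (ler_wpM2l (ler0n _ _) tail_le)) // mulrC divfK ?gt_eqF ?ltr0n.
Qed.

Lemma expectation_defective_failures_le (zeta eps1 d1 : R) :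
  0 < rho -> 0 < zeta < 1 - rho -> 0 < eps1 -> 0 < d1 ->
  ln ((eps1 * d1)^-1) / D2 zeta (1 - rho) <= t%:R ->
  expectation (fun w => (eps1 * k1%:R)^-1 *
    \sum_(i < k1) ((pos_count w (rshift k0 i))%:R <= zeta * t%:R)%R%:R) <= d1.
Proof.
move=> rho0 z_range eps0 d1_gt0 t_ge; rewrite expectationZ expectation_sum.
have weight_ge0 : 0 <= (eps1 * k1%:R)^-1 by rewrite invr_ge0 mulr_ge0 // ltW.
apply: le_trans (ler_wpM2l weight_ge0
  (ler_sum _ (fun i _ => defective_tail i rho0 z_range))) _.
rewrite sumr_const card_ord -[expR _ ^+ t *+ _]mulr_natl.
have D_gt0 : 0 < D2 zeta (1 - rho).
  case/andP: z_range => z0 z1.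
  by apply: D2_gt0; rewrite ?(lt_eqF z1) //; apply/andP; split; lra.
have y_gt0 : 0 < (eps1 * d1)^-1 by rewrite invr_gt0 mulr_gt0.
have := expRN_pow_le_inv D_gt0 y_gt0 t_ge; rewrite invrK => tail_le.
apply: le_trans (ler_wpM2l weight_ge0 (ler_wpM2l (ler0n _ _) tail_le)) _.
have -> : (eps1 * k1%:R)^-1 * (k1%:R * (eps1 * d1)) =
          (eps1 * k1%:R)^-1 * (eps1 * k1%:R) * d1 by ring.
have [->|eps1k1_neq0] := eqVneq (eps1 * k1%:R) 0; first by rewrite invr0 !mul0r ltW.
by rewrite mulVf ?mul1r.
Qed.

End IndividualTesting.

Lemma success_prob_ge (R : realType) (rho zeta eps1 d0 d1 : R) (k0 k1 t : nat) :
  0 < rho -> rho < zeta < 1 - rho -> 0 < eps1 -> 0 < d0 -> 0 < d1 ->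
  ln (k0%:R / d0) / D2 zeta rho <= t%:R ->
  ln ((eps1 * d1)^-1) / D2 zeta (1 - rho) <= t%:R ->
  1 - d0 - d1 <= success_prob rho eps1 k0 k1 t.
Proof.
move=> rho0 /andP[rz z1] eps0 d0_gt0 d1_gt0 t_ge0 t_ge1.
have rho01 : 0 <= rho <= 1 by apply/andP; split; lra.
have z_nondef : rho < zeta < 1 by apply/andP; split; lra.
have z_def : 0 < zeta < 1 - rho by apply/andP; split; lra.
pose X := @failure_weight R k0 k1 t eps1 (zeta * t%:R).
have X_ge0 w : 0 <= X w by apply: failure_weight_ge0; exact: ltW.
have X_top w : X w < 1 -> top_all_defective eps1 w.
  exact: top_all_defective_of_failure_weight.
apply: le_trans (success_prob_ge_markov rho01 X_ge0 X_top).
rewrite /X /failure_weight expectationD.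
have := expectation_nondefective_failures_le k1 rho01 rho0 z_nondef d0_gt0 t_ge0.
have := expectation_defective_failures_le k0 k1 rho01 rho0 z_def eps0 d1_gt0 t_ge1.
lra.
Qed.

Unset Implicit Arguments.

Theorem lemma5 (R : realType) (rho zeta eps1 : R) (k0 k1 t : nat -> nat)
    (delta0 delta1 : nat -> R) :
  0 < rho < 2^-1 ->
  rho < zeta < 1 - rho ->
  0 < eps1 < 1 ->
  (forall n, 0 < delta0 n < 1) ->
  (forall n, 0 < delta1 n < 1) ->
  (forall n, ln ((k0 n)%:R / delta0 n) / D2 zeta rho <= (t n)%:R) ->
  (forall n, ln ((eps1 * delta1 n)^-1) / D2 zeta (1 - rho) <= (t n)%:R) ->
  (* k0 = o(k1) *)
  (forall e : R, 0 < e -> \forall n \near \oo, (k0 n)%:R <= e * (k1 n)%:R) ->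
  \forall n \near \oo,
    1 - delta0 n - delta1 n <= success_prob rho eps1 (k0 n) (k1 n) (t n).
Proof.
move=> /andP[rho0 _] zeta_range /andP[eps0 _] delta0_range delta1_range t_ge0 t_ge1 _.
apply: nearW => n.
have [d0_gt0 _] := andP (delta0_range n); have [d1_gt0 _] := andP (delta1_range n).
exact: success_prob_ge rho0 zeta_range eps0 d0_gt0 d1_gt0 (t_ge0 n) (t_ge1 n).
Qed.
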